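(* Let $k\ge2$ be an integer and, for a positive integer $A$, let $f^\infty_A$ be the infinite word $(\mathsf{1}^A\mathsf{2}^A\cdots\mathsf{k}^A)(\mathsf{1}^A\mathsf{2}^A\cdots\mathsf{k}^A)\cdots$ over $[k]$. Let $A,B$ be positive integers with $kA\le B$, and let $s=(w_1',w_2')$ be a (finite) common subsequence between $f^\infty_A$ and $f^\infty_B$. Then \[\operatorname{span} s\ \ge\ \left(k+1-\frac{kA}{B}\right)\operatorname{len} s-2(A+B).\]
   Context: $\alpha^A$ denotes the letter $\alpha$ repeated $A$ times. Symbols in words are treated as distinguishable positions. A common subsequence of words $w_1,w_2$ is a pair $s=(w_1',w_2')$ of subsequences of $w_1$ and $w_2$ respectively that are equal as words; $\operatorname{len} s$ is their common length. The span $\operatorname{span}_w w'$ of a subsequence $w'$ of $w$ is the length of the shortest block of consecutive symbols of $w$ containing $w'$, and $\operatorname{span} s=\operatorname{span}_{w_1}w_1'+\operatorname{span}_{w_2}w_2'$. *)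

From mathcomp Require Import all_boot all_order all_algebra.
Set Implicit Arguments. Unset Strict Implicit. Unset Printing Implicit Defensive.

(* Letter at position i (0-indexed) of the infinite word
   f^oo_A = (1^A 2^A ... k^A)(1^A 2^A ... k^A)... over [k] = {1,...,k}. *)
Definition fword (k A i : nat) : nat := (i %/ A) %% k + 1.

(* A finite subsequence of an infinite word is given by its (strictly
   increasing) list of positions. *)
Definition spanw (s : seq nat) : nat :=
  if s is x :: _ then last x s - x + 1 else 0.

Definition common_subseq (k A B : nat) (s1 s2 : seq nat) : Prop :=
  [/\ sorted ltn s1, sorted ltn s2, size s1 = size s2 &
      forall i, i < size s1 -> fword k A (nth 0 s1 i) = fword k B (nth 0 s2 i)].

(* Attach to a pair of positions (x, y) of f_A and f_B the potential
     B (A floor(x/A) + k (x mod A)) + B^2 floor(y/B) + (B - kA) (y mod B).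
   Between consecutive matched pairs it grows by at least (k+1)B - kA: if y
   stays in its B-block, it gains B - kA while x moves to a position whose
   A-block is congruent mod k, gaining kB; if y enters a later B-block, the
   gain B^2 pays for any loss on x.  The potential stays within
   B(k-1)(A-1) + kA(B-1) of B (x + y), which turns this growth into the
   span bound. *)

From mathcomp Require Import all_boot all_order all_algebra zify ring lra.
Import Order.TTheory GRing.Theory Num.Theory.

Set Implicit Arguments.
Unset Strict Implicit.
Unset Printing Implicit Defensive.

Lemma head_leq_last x s : path ltn x s -> x <= last x s.
Proof.
move=> /(order_path_min ltn_trans)/allP x_min.
by case/predU1P: (mem_last x s) => [-> // | /x_min/ltnW].
Qed.

Definition weighted_pos (a c A x : nat) : nat := a * (x %/ A) + c * (x %% A).

Section WeightedPos.
Variables a c A : nat.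
Hypothesis A_gt0 : 0 < A.

Lemma weighted_pos_le x : weighted_pos a c A x <= a * (x %/ A) + c * (A - 1).
Proof.
rewrite leq_add2l leq_mul2l; apply/orP; right.
by have := ltn_pmod x A_gt0; lia.
Qed.

Lemma weighted_pos_same_block x x' :
  x %/ A = x' %/ A -> x < x' -> weighted_pos a c A x + c <= weighted_pos a c A x'.
Proof.
rewrite /weighted_pos => eq_q lt_xx'; rewrite eq_q -addnA leq_add2l -mulnSr leq_mul2l.
by have := divn_eq x A; have := divn_eq x' A; rewrite eq_q; lia.
Qed.

Lemma weighted_pos_block_shift m x x' : x %/ A + m <= x' %/ A ->
  weighted_pos a c A x + a * m <= weighted_pos a c A x' + c * (A - 1).
Proof.
move=> le_q; have := weighted_pos_le x; rewrite /weighted_pos.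
have : a * (x %/ A + m) <= a * (x' %/ A) by rewrite leq_mul2l le_q orbT.
lia.
Qed.

End WeightedPos.

Lemma eqn_mod_ltn_leq_add k q q' : q < q' -> q = q' %[mod k] -> q + k <= q'.
Proof.
move=> lt_qq' /eqP; rewrite eq_sym eqn_mod_dvd ?(ltnW lt_qq') // => /dvdn_leq.
by rewrite subn_gt0 lt_qq' => /(_ isT); lia.
Qed.

Lemma fword_eq_mod k A B x y :
  fword k A x = fword k B y -> x %/ A = y %/ B %[mod k].
Proof. exact: addIn. Qed.

Lemma span_slack k A B : 0 < k -> 0 < A -> 0 < B -> k * A <= B ->
  (k + 1) * B - k * A + B * ((k - 1) * (A - 1)) + k * A * (B - 1)
    <= 2 * B + 2 * B * (A + B).
Proof.
move=> k_gt0 A_gt0 B_gt0 kA_leB.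
have : k * A <= (k + 1) * B by apply: leq_trans kA_leB _; rewrite leq_pmull ?addn1.
move/subnK; move: ((k + 1) * B - k * A) => g.
have : k * A * B <= B * B by rewrite leq_mul2r kA_leB orbT.
case: k k_gt0 kA_leB => // k _; case: A A_gt0 => // A _; case: B B_gt0 => // B _.
by rewrite !subSS !subn0; nia.
Qed.

Definition potential (k A B x y : nat) : nat :=
  B * weighted_pos A k A x + weighted_pos (B * B) (B - k * A) B y.

Section Potential.
Variables (k A B : nat).
Hypotheses (A_gt0 : 0 < A) (B_gt0 : 0 < B) (kA_leB : k * A <= B).

Lemma potential_step x y x' y' : x < x' -> y < y' ->
  fword k A x = fword k B y -> fword k A x' = fword k B y' ->
  potential k A B x y + ((k + 1) * B - k * A) <= potential k A B x' y'.
Proof.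
move=> lt_xx' lt_yy' /fword_eq_mod eq_xy /fword_eq_mod eq_xy'.
have le_q : x %/ A <= x' %/ A by apply: leq_div2r; exact: ltnW.
have le_Q : y %/ B <= y' %/ B by apply: leq_div2r; exact: ltnW.
rewrite /potential; move: le_Q; rewrite leq_eqVlt => /predU1P[eq_Q | lt_Q].
  have y_step := weighted_pos_same_block (B * B) (B - k * A) B_gt0 eq_Q lt_yy'.
  have x_step : weighted_pos A k A x + k <= weighted_pos A k A x'.
    move: le_q; rewrite leq_eqVlt => /predU1P[eq_q | lt_q].
      exact: weighted_pos_same_block.
    have : x %/ A + k <= x' %/ A.
      by apply: eqn_mod_ltn_leq_add; rewrite // eq_xy eq_Q -eq_xy'.
    move/(weighted_pos_block_shift A k A_gt0).
    have -> : A * k = k * (A - 1) + k by rewrite mulnBr muln1 subnK ?leq_pmulr // mulnC.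
    by rewrite addnCA [_ + k * (A - 1)]addnC leq_add2l.
  rewrite mulnDl mul1n -addnBA // addnACA [k * B]mulnC -mulnDr.
  by apply: leq_add; rewrite // leq_mul2l x_step orbT.
have /(weighted_pos_block_shift A k A_gt0) x_step : x %/ A + 0 <= x' %/ A.
  by rewrite addn0.
have /(weighted_pos_block_shift (B * B) (B - k * A) B_gt0) y_step :
  y %/ B + 1 <= y' %/ B by rewrite addn1.
rewrite muln0 addn0 in x_step; rewrite muln1 in y_step.
have x_stepB : B * weighted_pos A k A x <= B * weighted_pos A k A x' + B * (k * (A - 1)).
  by rewrite -mulnDr leq_mul2l x_step orbT.
have balance : B * (k * (A - 1)) + (B - k * A) * (B - 1) + ((k + 1) * B - k * A)
    = B * B.
  clear -kA_leB A_gt0 B_gt0.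
  by have := subnKC kA_leB; move: (B - k * A) => D; nia.
move: x_stepB y_step balance.
move: (B * weighted_pos A k A x) (B * weighted_pos A k A x') => u u'.
move: (weighted_pos _ _ B y) (weighted_pos _ _ B y') => v v'.
move: (B * (k * (A - 1))) ((B - k * A) * (B - 1)) ((k + 1) * B - k * A) (B * B).
by clear eq_xy eq_xy' le_q lt_Q x_step; lia.
Qed.

Lemma potential_eq x y :
  potential k A B x y + k * A * (y %% B) + B * (x %% A)
    = B * (x + y) + B * (k * (x %% A)).
Proof.
rewrite /potential /weighted_pos; move: (divn_eq x A) (divn_eq y B).
move: (x %/ A) (x %% A) (y %/ B) (y %% B) => q r Q R -> ->.
have := subnKC kA_leB; move: (B - k * A) => D <-.
ring.
Qed.

Lemma potential_le x y :
  potential k A B x y <= B * (x + y) + B * ((k - 1) * (A - 1)).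
Proof.
have r_bound : k * (x %% A) <= x %% A + (k - 1) * (A - 1).
  by have := ltn_pmod x A_gt0; move: (x %% A) => r; clear; nia.
have : B * (k * (x %% A)) <= B * (x %% A + (k - 1) * (A - 1)).
  by rewrite leq_mul2l r_bound orbT.
rewrite mulnDr; have := potential_eq x y.
move: (potential k A B x y) (B * (k * (x %% A))) (B * (x %% A)) => P u v.
by move: (k * A * (y %% B)) (B * (x + y)) (B * ((k - 1) * (A - 1))); lia.
Qed.

Lemma potential_ge x y : 0 < k ->
  B * (x + y) <= potential k A B x y + k * A * (B - 1).
Proof.
move=> k_gt0; have : B * (x %% A) <= B * (k * (x %% A)).
  by rewrite leq_mul2l leq_pmull ?orbT.
have : k * A * (y %% B) <= k * A * (B - 1).
  by rewrite leq_mul2l; have := ltn_pmod y B_gt0; lia.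
have := potential_eq x y.
move: (potential k A B x y) (B * (k * (x %% A))) (B * (x %% A)) => P u v.
by move: (k * A * (y %% B)) (B * (x + y)); lia.
Qed.

Lemma common_subseq_behead x0 y0 xs ys :
  common_subseq k A B (x0 :: xs) (y0 :: ys) -> common_subseq k A B xs ys.
Proof.
case=> /path_sorted sorted_xs /path_sorted sorted_ys /succn_inj eq_size letters.
by split=> // i lt_i; exact: (letters i.+1).
Qed.

Lemma potential_last x0 y0 xs ys :
  common_subseq k A B (x0 :: xs) (y0 :: ys) ->
  potential k A B x0 y0 + size xs * ((k + 1) * B - k * A)
    <= potential k A B (last x0 xs) (last y0 ys).
Proof.
elim: xs ys x0 y0 => [|x1 xs IH] [|y1 ys] x0 y0 cs; first by rewrite addn0.
- by case: cs.
- by case: cs.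
have /= chain := IH _ _ _ (common_subseq_behead cs).
case: cs => /= /andP[lt_x _] /andP[lt_y _] _ letters.
have step := potential_step lt_x lt_y (letters 0 isT) (letters 1 isT).
by rewrite mulSn addnA (leq_trans _ chain) ?leq_add2r.
Qed.

Lemma common_subseq_span s1 s2 : 0 < k -> common_subseq k A B s1 s2 ->
  size s1 * ((k + 1) * B - k * A) <= B * (spanw s1 + spanw s2) + 2 * B * (A + B).
Proof.
move=> k_gt0; case: s1 s2 => [|x0 xs] [|y0 ys] cs; [by [] | by case: cs | by case: cs |].
have chain := potential_last cs.
have ub := potential_le (last x0 xs) (last y0 ys).
have lb := potential_ge x0 y0 k_gt0.
have span_eq : B * (spanw (x0 :: xs) + spanw (y0 :: ys)) + B * (x0 + y0)
    = B * (last x0 xs + last y0 ys) + 2 * B.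
  case: cs => /head_leq_last le_x /head_leq_last le_y _ _.
  by rewrite /spanw /= -mulnDr [2 * B]mulnC -mulnDr; congr (B * _); lia.
have slack := span_slack k_gt0 A_gt0 B_gt0 kA_leB.
rewrite [size _]/= mulSn; move: chain ub lb span_eq slack.
move: (potential k A B x0 y0) (potential k A B (last x0 xs) (last y0 ys)).
move: (B * (spanw _ + spanw _)) (B * (x0 + y0)) (B * (last x0 xs + last y0 ys)).
move: (size xs * ((k + 1) * B - k * A)) ((k + 1) * B - k * A).
move: (B * ((k - 1) * (A - 1))).
move: (k * A * (B - 1)) (2 * B * (A + B)).
by clear cs; lia.
Qed.

End Potential.

Local Open Scope ring_scope.

Theorem lemma3p3 (k A B : nat) (s1 s2 : seq nat) :
  (2 <= k)%N -> (0 < A)%N -> (0 < B)%N -> (k * A <= B)%N ->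
  common_subseq k A B s1 s2 ->
  ((k + 1)%:R - (k * A)%:R / B%:R) * (size s1)%:R - 2%:R * (A + B)%:R
    <= (spanw s1 + spanw s2)%:R :> rat.
Proof.
move=> k_ge2 A_gt0 B_gt0 kA_leB cs.
have := common_subseq_span A_gt0 B_gt0 kA_leB (ltnW k_ge2) cs.
have kA_le : (k * A <= (k + 1) * B)%N.
  by apply: leq_trans kA_leB _; rewrite leq_pmull ?addn1.
rewrite -(ler_nat rat) natrD !natrM natrB // !natrM => span_bound.
have B_neq0 : B%:R != 0 :> rat by rewrite pnatr_eq0 -lt0n.
rewrite -(ler_pM2r (_ : 0 < B%:R :> rat)) ?ltr0n // mulrBl.
have -> : ((k + 1)%:R - k%:R * A%:R / B%:R) * (size s1)%:R * B%:R
    = (size s1)%:R * ((k + 1)%:R * B%:R - k%:R * A%:R) :> rat by field.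
move: span_bound; rewrite !natrD; lra.
Qed.
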